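(* For fixed $x,y\ge 1$, let $a_{x,y,n}$ denote the probability that the $(x,y)$ edge-addition process on $n$ vertices generates an $(x,y)$ task-dependency graph. Then $\lim_{n\to\infty}a_{x,y,n}=1$.
   Context: A task-dependency graph is a finite directed acyclic graph (no loops, no multiple edges). A vertex is initial if it has in-degree $0$ and terminal if it has out-degree $0$ (an isolated vertex is both). An $(x,y)$ task-dependency graph has exactly $x$ initial and exactly $y$ terminal vertices. The $(x,y)$ edge-addition process on $n$ vertices: start with the empty graph on $\{1,\dots,n\}$ and repeatedly add, uniformly at random, an edge $(a,b)$ with $a<b$ not yet present; if an addition would cause fewer than $x$ initial vertices or fewer than $y$ terminal vertices, it is cancelled. The process halts if the graph after some edge addition is an $(x,y)$ task-dependency graph, or if no more edges can be added; the result is the final graph. *)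

From mathcomp Require Import all_boot all_order all_algebra.
Set Implicit Arguments. Unset Strict Implicit. Unset Printing Implicit Defensive.
Import Order.TTheory GRing.Theory Num.Theory.

(* The edge-addition process only ever adds edges (a,b) with a < b, so every
   graph it produces is a DAG without loops/multiple edges. *)
Definition graph n := {set 'I_n * 'I_n}.

Definition candidate_edge n (e : 'I_n * 'I_n) : bool := (e.1 < e.2)%N.

Definition is_initial n (G : graph n) (v : 'I_n) : bool :=
  [forall e in G, e.2 != v].
Definition is_terminal n (G : graph n) (v : 'I_n) : bool :=
  [forall e in G, e.1 != v].

Definition num_initial n (G : graph n) : nat := #|[set v | is_initial G v]|.
Definition num_terminal n (G : graph n) : nat := #|[set v | is_terminal G v]|.

Definition is_TDG (x y : nat) n (G : graph n) : bool :=
  (num_initial G == x) && (num_terminal G == y).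

(* An edge can be added (i.e. is not present and its addition is not cancelled). *)
Definition addable (x y : nat) n (G : graph n) (e : 'I_n * 'I_n) : bool :=
  [&& candidate_edge e, e \notin G,
      (x <= num_initial (e |: G))%N & (y <= num_terminal (e |: G))%N].

Local Open Scope ring_scope.

(* Conditioned on the graph actually
   changing, the next added edge is uniform among the addable edges (cancelled
   draws leave the state unchanged), so we follow this jump chain.
   fuel bounds the number of remaining additions. *)
Fixpoint success_prob (x y : nat) n (fuel : nat) (G : graph n) : rat :=
  match fuel with
  | 0%N => 0
  | k.+1 =>
    let A := [set e | addable x y G e] in
    if A == set0 then (is_TDG x y G)%:R
    else (#|A|%:R)^-1 *
         \sum_(e in A) (if is_TDG x y (e |: G) then 1 else success_prob x y k (e |: G))
  end.

(* a_{x,y,n}: start from the empty graph; at most n(n-1)/2 < n*n+1 additions. *)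
Definition a_xyn (x y n : nat) : rat :=
  success_prob x y (n * n).+1 (set0 : graph n).

(* The process can only fail by getting stuck with more than x initial or more
   than y terminal vertices.  If it is stuck with more than x initial vertices,
   take an initial vertex v <> 0: the edge (0, v) could only be blocked because
   vertex 0 is still isolated and exactly y vertices are terminal.  Hence the
   quantity y / #terminal, counted only while vertex 0 is isolated and more than
   x vertices are initial, equals 1 on such failures; the mirror quantity
   (reverse the graph) covers failures with more than y terminal vertices.
   Their sum starts at (x + y) / n and is a supermartingale of the jump chain:
   the at least n - 1 addable edges out of 0 drop y / T to 0, which outweighs the
   at most (T - 1)(n - 1) edges out of other terminal vertices, raising it to
   y / (T - 1) (and when T = y those edges are not addable at all).  So the
   failure probability is at most (x + y) / n. *)

From mathcomp Require Import all_boot all_order all_algebra.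
From mathcomp Require Import zify ring.
Import Order.TTheory GRing.Theory Num.Theory.
Set Implicit Arguments. Unset Strict Implicit. Unset Printing Implicit Defensive.
Local Open Scope ring_scope.

Lemma forall_setU1 (T : finType) (a : T) (A : {set T}) (P : pred T) :
  [forall z in a |: A, P z] = P a && [forall z in A, P z].
Proof.
apply/forallP/andP => [H | [Pa /forallP H] z].
  split; first by have /implyP := H a; apply; rewrite setU11.
  by apply/forallP => z; apply/implyP => zA; have /implyP := H z; apply; rewrite setU1r.
by apply/implyP; rewrite in_setU1 => /predU1P[-> // | zA]; have /implyP := H z; apply.
Qed.

Lemma sumr_nat_of_bool (R : pzSemiRingType) (T : finType) (A : {pred T}) (b : pred T) :
  \sum_(i in A) (b i)%:R = #|[set i in A | b i]|%:R :> R.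
Proof.
rewrite -natr_sum -sum1_card.
rewrite [in RHS](eq_bigl (fun i => (i \in A) && b i)) => [|i]; last by rewrite !inE.
by rewrite big_mkcondr; congr _%:R; apply: eq_bigr => i _; case: (b i).
Qed.

Lemma ler_mul_div_gap (R : numFieldType) (c : R) (q p s : nat) :
  0 <= c -> (q <= s * p)%N ->
  q%:R * (c / s%:R - c / s.+1%:R) <= p%:R * (c / s.+1%:R).
Proof.
move=> c0 qsp; case: s qsp => [|s] qsp.
  by move: qsp; rewrite mul0n leqn0 => /eqP->; rewrite mul0r mulr_ge0 ?divr_ge0.
have gap (a : R) : a != 0 -> a + 1 != 0 -> c / a - c / (a + 1) = c / (a * (a + 1)).
  by move=> a0 a1; field; apply/andP.
rewrite [s.+2%:R]mulrSr gap -?mulrSr ?pnatr_eq0 //.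
apply: le_trans (_ : (s.+1 * p)%:R * (c / (s.+1%:R * s.+2%:R)) <= _).
  by apply: ler_wpM2r; rewrite ?ler_nat // divr_ge0 ?mulr_ge0.
have cancel (a b : R) : a != 0 -> b != 0 -> a * p%:R * (c / (a * b)) = p%:R * (c / b).
  by move=> a0 b0; field; apply/andP.
by rewrite natrM cancel // pnatr_eq0.
Qed.

Section Degrees.
Variable n : nat.
Implicit Types (G : graph n) (e : 'I_n * 'I_n).

Lemma is_initialU e G v : is_initial (e |: G) v = (e.2 != v) && is_initial G v.
Proof. exact: forall_setU1. Qed.

Lemma is_terminalU e G v : is_terminal (e |: G) v = (e.1 != v) && is_terminal G v.
Proof. exact: forall_setU1. Qed.

Lemma num_initialU e G :
  num_initial G = (is_initial G e.2 + num_initial (e |: G))%N.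
Proof.
rewrite /num_initial (cardsD1 e.2) inE; congr (_ + _)%N.
by apply: eq_card => v; rewrite !inE is_initialU eq_sym.
Qed.

Lemma num_terminalU e G :
  num_terminal G = (is_terminal G e.1 + num_terminal (e |: G))%N.
Proof.
rewrite /num_terminal (cardsD1 e.1) inE; congr (_ + _)%N.
by apply: eq_card => v; rewrite !inE is_terminalU eq_sym.
Qed.

Lemma num_initial0 : num_initial (set0 : graph n) = n.
Proof.
rewrite /num_initial -[RHS]card_ord -cardsT; apply: eq_card => v.
by rewrite !inE; apply/forallP => e; rewrite inE.
Qed.

Lemma num_terminal0 : num_terminal (set0 : graph n) = n.
Proof.
rewrite /num_terminal -[RHS]card_ord -cardsT; apply: eq_card => v.
by rewrite !inE; apply/forallP => e; rewrite inE.
Qed.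

Lemma terminal_notin G u v : is_terminal G u -> (u, v) \notin G.
Proof. by move/forallP/(_ (u, v)); rewrite eqxx implybF. Qed.

Lemma initial_notin G u v : is_initial G v -> (u, v) \notin G.
Proof. by move/forallP/(_ (u, v)); rewrite eqxx implybF. Qed.

Variables x y : nat.

Lemma addableE G e : addable x y G e =
  [&& candidate_edge e, e \notin G,
      (x + is_initial G e.2 <= num_initial G)%N &
      (y + is_terminal G e.1 <= num_terminal G)%N].
Proof.
by rewrite /addable (num_initialU e G) (num_terminalU e G) [(_ + num_initial _)%N]addnC
  [(_ + num_terminal _)%N]addnC !leq_add2r.
Qed.

End Degrees.

Section Process.
Variables x y n : nat.
Implicit Types (G : graph n) (e : 'I_n * 'I_n).

Definition addable_edges G : {set 'I_n * 'I_n} := [set e | addable x y G e].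

Definition admissible G : bool :=
  (x <= num_initial G)%N && (y <= num_terminal G)%N.

Lemma admissibleU G e : addable x y G e -> admissible (e |: G).
Proof. by case/and4P => _ _ xI yT; apply/andP. Qed.

Lemma card_addable_edges_gt0 G :
  addable_edges G != set0 -> 0 < #|addable_edges G|%:R :> rat.
Proof. by rewrite ltr0n card_gt0. Qed.

Lemma success_prob_le1 k G : success_prob x y k G <= 1.
Proof.
elim: k G => [|k IHk] G /=; first exact: ler01.
rewrite -/(addable_edges G); case: ifP => [_ | /negbT nstuck].
  by rewrite lern1 leq_b1.
rewrite ler_pdivrMl ?card_addable_edges_gt0 // mulr1 -sumr_const.
by apply: ler_sum => e _; case: ifP.
Qed.

Section PotentialBound.
Variable phi : graph n -> rat.
Hypothesis phi_ge0 : forall G, 0 <= phi G.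
Hypothesis phi_stuck : forall G,
  admissible G -> addable_edges G = set0 -> ~~ is_TDG x y G -> 1 <= phi G.
Hypothesis phi_super : forall G,
  \sum_(e in addable_edges G) phi (e |: G) <= #|addable_edges G|%:R * phi G.

Lemma success_prob_ge_potential k G :
  admissible G -> (n * n < k + #|G|)%N -> 1 - phi G <= success_prob x y k G.
Proof.
elim: k G => [|k IHk] G adm fuel /=.
  by have := max_card G; rewrite card_prod card_ord; lia.
rewrite -/(addable_edges G); case: ifP => [/eqP stuck | /negbT nstuck].
  case: (boolP (is_TDG x y G)) => [_ | nTDG]; first by rewrite gerBl.
  by rewrite subr_le0 phi_stuck.
rewrite ler_pdivlMl ?card_addable_edges_gt0 //.
apply: le_trans (_ : \sum_(e in addable_edges G) (1 - phi (e |: G)) <= _).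
  by rewrite sumrB sumr_const mulrBr mulr1 lerB.
apply: ler_sum => e; rewrite inE => adde; case: ifP => _; first by rewrite gerBl.
apply: IHk; first exact: admissibleU.
by case/and4P: adde => _ eG _ _; rewrite cardsU1 eG; lia.
Qed.

End PotentialBound.
End Process.

Section Reversal.
Variable n : nat.
Implicit Types (G : graph n) (e : 'I_n * 'I_n).

Definition rev_edge e : 'I_n * 'I_n := (rev_ord e.2, rev_ord e.1).

Lemma rev_edgeK : involutive rev_edge.
Proof. by case=> a b; rewrite /rev_edge /= !rev_ordK. Qed.

Lemma rev_edge_inj : injective rev_edge.
Proof. exact: inv_inj rev_edgeK. Qed.

Definition rev_graph G : graph n := rev_edge @^-1: G.

Lemma rev_graph0 : rev_graph set0 = set0.
Proof. exact: preimset0. Qed.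

Lemma rev_graphU e G : rev_graph (e |: G) = rev_edge e |: rev_graph G.
Proof.
apply/setP => f; rewrite !inE; congr (_ || _).
by rewrite -{1}(rev_edgeK e) (inj_eq rev_edge_inj).
Qed.

Lemma is_initial_rev G v : is_initial (rev_graph G) v = is_terminal G (rev_ord v).
Proof.
apply/forallP/forallP => H e; apply/implyP => eG.
  have /implyP := H (rev_edge e); rewrite inE rev_edgeK => /(_ eG).
  by apply: contraNneq => /= ->; rewrite rev_ordK.
rewrite inE in eG; have /implyP := H (rev_edge e) => /(_ eG).
by apply: contraNneq => /= ->.
Qed.

Lemma is_terminal_rev G v : is_terminal (rev_graph G) v = is_initial G (rev_ord v).
Proof.
apply/forallP/forallP => H e; apply/implyP => eG.
  have /implyP := H (rev_edge e); rewrite inE rev_edgeK => /(_ eG).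
  by apply: contraNneq => /= ->; rewrite rev_ordK.
rewrite inE in eG; have /implyP := H (rev_edge e) => /(_ eG).
by apply: contraNneq => /= ->.
Qed.

Lemma num_initial_rev G : num_initial (rev_graph G) = num_terminal G.
Proof.
rewrite /num_initial -(card_preimset _ (@rev_ord_inj n)); apply: eq_card => v.
by rewrite !inE is_initial_rev rev_ordK.
Qed.

Lemma num_terminal_rev G : num_terminal (rev_graph G) = num_initial G.
Proof.
rewrite /num_terminal -(card_preimset _ (@rev_ord_inj n)); apply: eq_card => v.
by rewrite !inE is_terminal_rev rev_ordK.
Qed.

Lemma candidate_edge_rev e : candidate_edge (rev_edge e) = candidate_edge e.
Proof.
by case: e => a b; rewrite /candidate_edge /=; have := ltn_ord a; have := ltn_ord b; lia.
Qed.

Variables x y : nat.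

Lemma addable_rev G e : addable y x (rev_graph G) (rev_edge e) = addable x y G e.
Proof.
rewrite /addable candidate_edge_rev inE rev_edgeK -rev_graphU.
by rewrite num_initial_rev num_terminal_rev [((y <= _)%N && _)]andbC.
Qed.

Lemma addable_edges_rev G :
  addable_edges y x (rev_graph G) = rev_edge @^-1: addable_edges x y G.
Proof. by apply/setP => e; rewrite !inE -addable_rev rev_edgeK. Qed.

Lemma admissible_rev G : admissible y x (rev_graph G) = admissible x y G.
Proof. by rewrite /admissible num_initial_rev num_terminal_rev andbC. Qed.

End Reversal.

Section HeadPotential.
Variables x y m : nat.
Local Notation n := m.+1.
Implicit Types (G : graph n) (e : 'I_n * 'I_n).

Definition head_potential G : rat :=
  if is_terminal G ord0 && (x < num_initial G)%N
  then y%:R / (num_terminal G)%:R else 0.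

Lemma head_potential_ge0 G : 0 <= head_potential G.
Proof. by rewrite /head_potential; case: ifP; rewrite // divr_ge0. Qed.

Lemma head_potential_le G : head_potential G <= y%:R / (num_terminal G)%:R.
Proof. by rewrite /head_potential; case: ifP; rewrite // divr_ge0. Qed.

Lemma head_edge_addable G (b : 'I_n) :
  (0 < b)%N -> (ord0, b) \notin G -> (x < num_initial G)%N ->
  addable x y G (ord0, b) = (y + is_terminal G ord0 <= num_terminal G)%N.
Proof.
move=> b_gt0 bG xI; rewrite addableE /candidate_edge /= b_gt0 bG /=.
suff -> : (x + is_initial G b <= num_initial G)%N by [].
by case: (is_initial G b) => /=; lia.
Qed.

Lemma head_potential_stuck G : (0 < x)%N -> (0 < y)%N ->
  admissible x y G -> addable_edges x y G = set0 -> (x < num_initial G)%N ->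
  head_potential G = 1.
Proof.
move=> x_gt0 y_gt0 /andP[_ yT] stuck xI.
have [v vI v0] : exists2 v, is_initial G v & v != ord0.
  have := cardsD1 ord0 [set v | is_initial G v]; rewrite -/(num_initial G) => cardI.
  have /set0Pn[v] : [set v | is_initial G v] :\ ord0 != set0.
    by rewrite -card_gt0; move: cardI; case: (_ \in _) => /=; lia.
  by rewrite !inE => /andP[v0 vI]; exists v.
have : addable x y G (ord0, v) = false.
  by rewrite -[LHS]inE -/(addable_edges _ _ _) stuck inE.
rewrite head_edge_addable ?lt0n ?initial_notin // => /negbT; rewrite -ltnNge => T_lt.
have t0 : is_terminal G ord0 by move: T_lt; case: (is_terminal G ord0) => /=; lia.
have T_eq : num_terminal G = y by move: T_lt; rewrite t0 /=; lia.
by rewrite /head_potential t0 xI T_eq divff // pnatr_eq0 -lt0n.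
Qed.

Lemma head_potential_addU G e :
  head_potential (e |: G) <= y%:R / (num_terminal G)%:R
    + ((e.1 != ord0) && is_terminal G e.1)%:R
        * (y%:R / (num_terminal G).-1%:R - y%:R / (num_terminal G)%:R)
    - (e.1 == ord0)%:R * (y%:R / (num_terminal G)%:R).
Proof.
case: (eqVneq e.1 ord0) => [e0 | e_neq0] /=.
  by rewrite /head_potential is_terminalU e0 eqxx /= mul0r mul1r addr0 subrr.
rewrite mul0r subr0; apply: le_trans (head_potential_le _) _.
have := num_terminalU e G; case: (is_terminal G e.1) => /= [T_eq | ->].
  by rewrite T_eq add1n /= mul1r addrC subrK.
by rewrite mul0r addr0.
Qed.

Section Step.
Variable G : graph n.
Hypotheses (t0 : is_terminal G ord0) (xI : (x < num_initial G)%N).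
Let A := addable_edges x y G.
Let P := [set e in A | e.1 == ord0].
Let Q := [set e in A | (e.1 != ord0) && is_terminal G e.1].

Lemma card_head_edges_le :
  (#|Q| <= (num_terminal G).-1 * #|P|)%N.
Proof.
have [T_le | yT] := leqP (num_terminal G) y.
  suff -> : Q = set0 by rewrite cards0.
  apply/setP => e; rewrite !inE addableE; apply/negbTE.
  apply/negP => /andP[/and4P[_ _ _ T_ge] /andP[_ te]].
  by move: T_ge; rewrite te /=; lia.
have P_ge : (m <= #|P|)%N.
  have card_heads : #|[set (ord0 : 'I_n, lift ord0 b) | b in [set: 'I_m]]| = m.
    by rewrite card_imset ?cardsT ?card_ord // => b c [bc]; apply/val_inj.
  rewrite -[X in (X <= _)%N]card_heads; apply: subset_leq_card.
  apply/subsetP => _ /imsetP[b _ ->]; rewrite !inE /= eqxx andbT.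
  rewrite head_edge_addable ?terminal_notin // ?t0 ?addn1 //.
have Q_le : (#|Q| <= (num_terminal G).-1 * m)%N.
  have card_tails : #|setX ([set v | is_terminal G v] :\ ord0) [set~ (ord0 : 'I_n)]|
      = ((num_terminal G).-1 * m)%N.
    rewrite cardsX cardsC1 card_ord /num_terminal.
    by rewrite (cardsD1 ord0 [set v | is_terminal G v]) inE t0.
  rewrite -card_tails; apply: subset_leq_card; apply/subsetP => -[a b].
  rewrite !inE /= => /andP[/and4P[ab _ _ _] /andP[a0 ->]]; rewrite a0 /=.
  by apply: contraTneq ab => ->.
exact: leq_trans Q_le (leq_mul (leqnn _) P_ge).
Qed.

End Step.

Lemma head_potential_super G :
  \sum_(e in addable_edges x y G) head_potential (e |: G)
    <= #|addable_edges x y G|%:R * head_potential G.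
Proof.
rewrite {2}/head_potential; case: ifP => [/andP[t0 xI] | dormant]; last first.
  rewrite mulr0 big1 // => e _; rewrite /head_potential ifF //.
  apply: contraFF dormant; rewrite is_terminalU => /andP[/andP[_ ->] xI] /=.
  by rewrite (num_initialU e G) (leq_trans xI) ?leq_addl.
have T_gt0 : (0 < num_terminal G)%N by apply/card_gt0P; exists ord0; rewrite inE.
apply: le_trans (ler_sum _ (fun e _ => head_potential_addU G e)) _.
rewrite sumrB big_split /= sumr_const -!mulr_suml !sumr_nat_of_bool.
rewrite -[_ *+ #|_|]mulr_natl -addrA gerDl subr_le0.
move: (num_terminal G) T_gt0 (card_head_edges_le t0 xI) => [|s] // _.
exact: ler_mul_div_gap.
Qed.

End HeadPotential.

Section Potential.
Variables x y m : nat.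
Hypotheses (x_gt0 : (0 < x)%N) (y_gt0 : (0 < y)%N).
Local Notation n := m.+1.
Implicit Types G : graph n.

Definition potential G : rat :=
  head_potential x y G + head_potential y x (rev_graph G).

Lemma potential_ge0 G : 0 <= potential G.
Proof. by rewrite addr_ge0 ?head_potential_ge0. Qed.

Lemma potential_stuck G : admissible x y G -> addable_edges x y G = set0 ->
  ~~ is_TDG x y G -> 1 <= potential G.
Proof.
move=> adm stuck nTDG; have [xI | Ix] := ltnP x (num_initial G).
  by rewrite /potential head_potential_stuck // lerDl head_potential_ge0.
have yT : (y < num_terminal G)%N.
  case/andP: adm nTDG => xI yT.
  by rewrite /is_TDG eqn_leq Ix xI /= ltn_neqAle yT andbT eq_sym.
rewrite /potential [head_potential y x _]head_potential_stuck //.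
- by rewrite lerDr head_potential_ge0.
- by rewrite admissible_rev.
- by rewrite addable_edges_rev stuck preimset0.
- by rewrite num_initial_rev.
Qed.

Lemma potential_super G :
  \sum_(e in addable_edges x y G) potential (e |: G)
    <= #|addable_edges x y G|%:R * potential G.
Proof.
rewrite big_split mulrDr lerD ?head_potential_super //.
have -> : \sum_(e in addable_edges x y G) head_potential y x (rev_graph (e |: G))
    = \sum_(e in addable_edges y x (rev_graph G)) head_potential y x (e |: rev_graph G).
  rewrite [RHS](reindex_inj (@rev_edge_inj n)); apply: eq_big => [e | e _].
    by rewrite addable_edges_rev !inE rev_edgeK.
  by rewrite rev_graphU.
rewrite -(card_preimset _ (@rev_edge_inj n)) -addable_edges_rev.
exact: head_potential_super.
Qed.

Lemma potential0 : potential set0 <= (x + y)%:R / n%:R.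
Proof.
rewrite /potential rev_graph0 natrD mulrDl addrC.
apply: lerD; apply: le_trans (head_potential_le _ _ _) _.
  by rewrite num_terminal0.
by rewrite num_terminal0.
Qed.

Lemma a_xyn_ge : (x <= n)%N -> (y <= n)%N -> 1 - (x + y)%:R / n%:R <= a_xyn x y n.
Proof.
move=> xn yn; apply: le_trans (success_prob_ge_potential potential_ge0 potential_stuck
  potential_super _ _); first by rewrite lerB ?potential0.
- by rewrite /admissible num_initial0 num_terminal0 xn yn.
- by rewrite cards0 addn0.
Qed.

End Potential.

Theorem mainTheorem18 (x y : nat) (hx : (1 <= x)%N) (hy : (1 <= y)%N) :
  forall eps : rat, 0 < eps ->
  exists N : nat, forall n : nat, (N <= n)%N -> `|1 - a_xyn x y n| < eps.
Proof.
move=> eps eps_gt0.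
pose K := Num.Def.archi_bound ((x + y)%:R / eps).
have K_gt : (x + y)%:R / eps < K%:R.
  by apply: archi_boundP; rewrite divr_ge0 ?ler0n // ltW.
exists (K + x + y).+1 => -[|m] // N_le.
have a_ge := a_xyn_ge hx hy (_ : x <= m.+1)%N (_ : y <= m.+1)%N.
rewrite ger0_norm ?subr_ge0 ?success_prob_le1 //.
apply: le_lt_trans (_ : (x + y)%:R / m.+1%:R < eps).
  by rewrite lerBlDr -lerBlDl a_ge //; lia.
rewrite ltr_pdivrMr // in K_gt; rewrite ltr_pdivrMr ?ltr0n //.
by apply: lt_le_trans K_gt _; rewrite mulrC ler_pM2l // ler_nat; lia.
Qed.
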